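(* Let $(X,\alpha,T)$ be a dynamical system with $T=\mathbb{Z}$ or $T=\mathbb{R}$ acting by homeomorphisms on a compact metrizable space $X$. Then $\mathcal M=\mathcal M^+\cup\mathcal M^-$, and $\mathcal M^+$ and $\mathcal M^-$ are left ideals of $E$.
   Context: $\alpha^t$ are homeomorphisms with $\alpha^{s+t}=\alpha^s\circ\alpha^t$, $\alpha^0=\mathrm{id}$. $E$ is the closure of $\{\alpha^t:t\in T\}$ in $X^X$ (pointwise convergence topology, composition), $E^+$ and $E^-$ the closures of $\{\alpha^t: t\ge0\}$ and $\{\alpha^t:t\le0\}$. $\mathcal M$, $\mathcal M^+$, $\mathcal M^-$ denote the kernels (unique minimal two-sided ideals) of $E$, $E^+$, $E^-$. A left ideal of $S$ is a non-empty $I\subset S$ with $SI\subset I$. *)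

From HB Require Import structures.
From mathcomp Require Import all_boot all_order all_algebra.
From mathcomp Require Import all_classical all_reals all_analysis.
Set Implicit Arguments. Unset Strict Implicit. Unset Printing Implicit Defensive.
Import Order.TTheory GRing.Theory Num.Theory.
Local Open Scope classical_set_scope.
Local Open Scope ring_scope.

Definition is_flow (T : zmodType) (X : topologicalType) (alpha : T -> X -> X) : Prop :=
  (forall t, continuous (alpha t) /\
     exists g : X -> X, [/\ continuous g, cancel (alpha t) g & cancel g (alpha t)])
  /\ (forall s t, alpha (s + t) = alpha s \o alpha t)
  /\ alpha 0 = id.

Definition envelope (T : Type) (X : topologicalType) (alpha : T -> X -> X)
  (P : set T) : set {ptws X -> X} :=
  closure [set (alpha t : {ptws X -> X}) | t in P].

Definition left_ideal (X : Type) (S I : set (X -> X)) : Prop :=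
  I !=set0 /\ I `<=` S /\ (forall s i, S s -> I i -> I (s \o i)).

Definition two_sided_ideal (X : Type) (S I : set (X -> X)) : Prop :=
  left_ideal S I /\ (forall i s, I i -> S s -> I (i \o s)).

Definition minimal_two_sided_ideal (X : Type) (S I : set (X -> X)) : Prop :=
  two_sided_ideal S I /\ (forall J, two_sided_ideal S J -> J `<=` I -> J = I).

From HB Require Import structures.
From mathcomp Require Import all_boot all_order all_algebra.
From mathcomp Require Import all_classical all_reals all_analysis.
Import Order.TTheory GRing.Theory Num.Theory.
Local Open Scope classical_set_scope.
Local Open Scope ring_scope.
Set Implicit Arguments. Unset Strict Implicit. Unset Printing Implicit Defensive.

(* Every alpha t commutes with the envelope E.  Hence for s >= 0 the set
   alpha s \o M+ is a two-sided ideal of E+ inside M+, so it equals M+ by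
   minimality, and M+ is invariant under alpha s and alpha (-s) alike.  Writing
   each element of M+ as a product a \o b of two of its elements and using that
   E+ is closed and composition is continuous in its left factor, invariance
   passes from the maps alpha t to their closure E: M+ is a left ideal of E, and
   so it lies in M.  Conversely, E is compact, so M is the union of the minimal
   left ideals L of E.  If m in L also lies in E+, then k \o m lies in L and in
   M+ for any k in M+, whence L is contained in M+ by minimality.  Since
   E = E+ u E-, this gives M = M+ u M-. *)

Definition minimal_left_ideal (X : Type) (S L : set (X -> X)) :=
  left_ideal S L /\ forall J, left_ideal S J -> J `<=` L -> J = L.

Section Semigroup.
Variables (X : Type) (S : set (X -> X)).
Hypothesis compS : forall p q, S p -> S q -> S (p \o q).

Lemma left_ideal_rcomp y : S y -> left_ideal S [set s \o y | s in S].
Proof.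
move=> Sy; split; first by exists (y \o y); exists y.
split; first by move=> _ [s Ss <-]; exact: compS.
by move=> s _ Ss [e Se <-]; exists (s \o e) => //; exact: compS.
Qed.

Lemma minimal_left_ideal_sub J L : left_ideal S J -> minimal_left_ideal S L ->
  J `&` L !=set0 -> L `<=` J.
Proof.
move=> [_ [JS Jl]] [[_ [LS Ll]] Lmin] JL0.
suff <- : J `&` L = L by move=> x [].
apply: Lmin; last by move=> x [].
split=> //; split; first by move=> x [_ /LS].
by move=> s x Ss [Jx Lx]; split; [exact: Jl | exact: Ll].
Qed.

Lemma minimal_left_ideal_rcomp L s : minimal_left_ideal S L -> S s ->
  minimal_left_ideal S [set l \o s | l in L].
Proof.
move=> [[[l0 Ll0] [LS Ll]] Lmin] Ss; split.
  split; first by exists (l0 \o s); exists l0.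
  split; first by move=> _ [l Ll' <-]; apply: compS => //; exact: LS.
  by move=> t _ St [l Ll' <-]; exists (t \o l) => //; exact: Ll.
move=> J [[j Jj] [JS Jl]] JLs; apply/seteqP; split => // _ [l Ll' <-].
have J'L : [set x | L x /\ J (x \o s)] = L.
  apply: Lmin; last by move=> x [].
  split; first by have [l1 Ll1 l1s] := JLs _ Jj; exists l1; split => //; rewrite l1s.
  split; first by move=> x [/LS].
  by move=> t x St [Lx Jx]; split; [exact: Ll | exact: (Jl t (x \o s))].
by have [] : [set x | L x /\ J (x \o s)] l by rewrite J'L.
Qed.

Lemma minimal_ideal_sub (S' J I : set (X -> X)) :
  minimal_two_sided_ideal S' J -> two_sided_ideal S I -> S' `<=` S ->
  I `&` J !=set0 -> J `<=` I.
Proof.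
move=> [[[_ [JS' Jl]] Jr] Jmin] [[_ [IS Il]] Ir] S'S IJ0.
suff <- : I `&` J = J by move=> x [].
apply: Jmin; last by move=> x [].
split; [split=> //; split |].
- by move=> x [_ /JS'].
- by move=> s x S's [Ix Jx]; split; [apply: Il => //; exact: S'S | exact: Jl].
- by move=> x s [Ix Jx] S's; split; [apply: Ir => //; exact: S'S | exact: Jr].
Qed.

Lemma minimal_left_ideals_ideal : (exists L, minimal_left_ideal S L) ->
  two_sided_ideal S [set x | exists2 L, minimal_left_ideal S L & L x].
Proof.
move=> [L0 minL0]; have [[[l0 L0l0] _] _] := minL0.
split; [split; [|split] |].
- by exists l0; exists L0.
- by move=> x [L [[_ [LS _]] _] /LS].
- by move=> s x Ss [L minL Lx]; exists L => //; exact: minL.1.2.2.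
- by move=> x s [L minL Lx] Ss; exists [set l \o s | l in L];
    [exact: minimal_left_ideal_rcomp | exists x].
Qed.

Lemma minimal_ideal_cover M : (exists L, minimal_left_ideal S L) ->
  minimal_two_sided_ideal S M ->
  forall m, M m -> exists2 L, minimal_left_ideal S L & L m.
Proof.
move=> exL minM; have KS := minimal_left_ideals_ideal exL.
apply: (minimal_ideal_sub minM KS) => //.
have [[[m0 Mm0] [MS _]] Mr] := minM.1; have [[[k0 Kk0] [KS' Kl]] _] := KS.
by exists (m0 \o k0); split; [apply: Kl => //; exact: MS | apply: Mr => //; exact: KS'].
Qed.

Lemma minimal_ideal_mul M i : minimal_two_sided_ideal S M -> M i ->
  exists a b, [/\ M a, M b & i = a \o b].
Proof.
move=> [[[[i0 Mi0] [MS Ml]] Mr] Mmin] Mi.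
pose MM := [set x | exists a b, [/\ M a, M b & x = a \o b]].
suff MMM : MM = M by rewrite -MMM in Mi.
apply: Mmin; last by move=> _ [a [b [Ma Mb ->]]]; apply: Ml => //; exact: MS.
split; [split; [|split] |].
- by exists (i0 \o i0); exists i0, i0.
- by move=> _ [a [b [Ma Mb ->]]]; apply/MS/Ml => //; exact: MS.
- by move=> s _ Ss [a [b [Ma Mb ->]]]; exists (s \o a), b; split => //; exact: Ml.
- by move=> _ s [a [b [Ma Mb ->]]] Ss; exists a, (b \o s); split => //; exact: Mr.
Qed.

End Semigroup.

Lemma closure_sub_preimage (S U : topologicalType) (f : S -> U) (A : set S)
    (B : set U) :
  continuous f -> closed B -> A `<=` f @^-1` B -> forall p, closure A p -> B (f p).
Proof.
move=> fc cB AB; rewrite closureE; apply: smallest_sub AB.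
by apply: preimage_closed => // x _; exact: fc.
Qed.

Lemma closure_eq_continuous (S U : topologicalType) (f g : S -> U) (A : set S) :
  hausdorff_space U -> continuous f -> continuous g ->
  (forall a, A a -> f a = g a) -> forall p, closure A p -> f p = g p.
Proof.
move=> hU fc gc fg p clp; apply: hU => V W nV nW.
have nVW : nbhs p (f @^-1` V `&` g @^-1` W) by apply: filterI; [exact: fc | exact: gc].
have [a [Aa [Va Wa]]] := clp _ nVW.
by exists (f a); split => //; rewrite fg.
Qed.

Lemma compact_chain_bigcap (T : topologicalType) (K : set T) (I : Type)
    (D : set I) (C : I -> set T) :
  compact K -> D !=set0 -> total_on D (fun i j => C i `<=` C j) ->
  (forall i, D i -> [/\ closed (C i), C i !=set0 & C i `<=` K]) ->
  \bigcap_(i in D) C i !=set0.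
Proof.
move=> cK [i0 Di0] Dtot DC.
have CF : ProperFilter (filter_from D C).
  apply: filter_from_proper; last by move=> i /DC [].
  apply: filter_from_filter; first by exists i0.
  move=> i j Di Dj; have [Cij|Cji] := Dtot i j Di Dj.
    by exists i => // x Cx; split => //; exact: Cij.
  by exists j => // x Cx; split => //; exact: Cji.
have [|p [_ clp]] := cK _ CF; first by exists i0 => //; have [] := DC i0 Di0.
exists p => i Di; have [cC _ _] := DC i Di.
by apply: cC => V nV; apply: clp => //; exists i.
Qed.

Section PointwiseComposition.
Variable X : uniformType.
Local Notation PT := {ptws X -> X}.

Lemma ptws_rcomp_continuous (q : X -> X) :
  continuous (fun p : PT => (p \o q : PT)).
Proof.
move=> p; apply/(@pointwise_cvgP X X _ (p \o q) (fmap_filter _ (@nbhs_filter PT p))) => t.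
have : (nbhs p) --> (p : PT) by exact: cvg_id.
by move/(@pointwise_cvgP X X _ p _)=> /(_ (q t)).
Qed.

Lemma ptws_lcomp_continuous (f : X -> X) :
  continuous f -> continuous (fun p : PT => (f \o p : PT)).
Proof.
move=> fc p; apply/(@pointwise_cvgP X X _ (f \o p) (fmap_filter _ (@nbhs_filter PT p))) => t.
have : (nbhs p) --> (p : PT) by exact: cvg_id.
move/(@pointwise_cvgP X X _ p _)=> /(_ t) pt.
apply: (cvg_comp _ _ pt); exact: fc.
Qed.

Lemma ptws_compact : compact [set: X] -> compact [set: PT].
Proof.
move=> cX; have := @tychonoff X (fun _ => X) (fun _ => setT) (fun _ => cX).
by congr compact; apply/seteqP; split.
Qed.

End PointwiseComposition.

Section CompactSemigroup.
Variable X : uniformType.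
Local Notation PT := {ptws X -> X}.
Hypothesis hX : hausdorff_space X.
Variable E : set (X -> X).
Hypothesis compE : forall p q, E p -> E q -> E (p \o q).
Hypothesis E0 : E !=set0.
Hypothesis compactE : compact (E : set PT).

Let ptws_hausdorff : hausdorff_space PT.
Proof. exact: hausdorff_product. Qed.

Let closed_left_ideal (L : set (X -> X)) := left_ideal E L /\ closed (L : set PT).

Lemma closed_rcomp_image p : closed ([set e \o p | e in E] : set PT).
Proof.
apply: compact_closed => //.
apply: (@continuous_compact PT PT (fun e : PT => (e \o p : PT))) => //.
apply: continuous_subspaceT; exact: ptws_rcomp_continuous.
Qed.

Lemma closed_left_ideal_bigcap (I : Type) (D : set I) (L : I -> set (X -> X)) :
  D !=set0 -> total_on D (fun i j => L i `<=` L j) ->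
  (forall i, D i -> closed_left_ideal (L i)) ->
  closed_left_ideal (\bigcap_(i in D) L i).
Proof.
move=> [i0 Di0] Dtot DL; split; last by apply: closed_bigI => i /DL [].
split.
  apply: (@compact_chain_bigcap PT E) => //; first by exists i0.
  by move=> i /DL [[Li0 [LiE _]] cLi].
split; first by have [[_ [LE _]] _] := DL i0 Di0; move=> x /(_ i0 Di0) /LE.
by move=> s x Es Lx i Di; have [[_ [_ Ll]] _] := DL i Di; apply: Ll => //; exact: Lx.
Qed.

Lemma exists_minimal_closed_left_ideal : exists L, closed_left_ideal L /\
  forall L', closed_left_ideal L' -> L' `<=` L -> L `<=` L'.
Proof.
(* Zorn_bigcup bounds chains by unions, so it is applied to the complements A
   of the closed left ideals E `&` ~` A. *)
pose P (A : set (X -> X)) := closed_left_ideal (E `&` ~` A).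
have [|A [PA Amax]] := @Zorn_bigcup _ P.
  move=> F FP Ftot; have [[A0 FA0]|F0] := pselect (F !=set0); last first.
    have -> : \bigcup_(A in F) A = set0.
      by apply/seteqP; split=> // x [A FA _]; apply: F0; exists A.
    rewrite /P setC0 setIT; split; last exact: compact_closed.
    by split=> //; split.
  rewrite /P setC_bigcup.
  have -> : E `&` \bigcap_(A in F) ~` A = \bigcap_(A in F) (E `&` ~` A).
    apply/seteqP; split=> [x [Ex nFx] A FA|x Fx]; first by split=> //; exact: nFx.
    by split=> [|A FA]; [exact: (Fx A0 FA0).1 | exact: (Fx A FA).2].
  apply: closed_left_ideal_bigcap => //; first by exists A0.
  move=> A B FA FB; have [AB|BA] := Ftot A B FA FB.
    by right=> x [Ex nBx]; split=> // /AB.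
  by left=> x [Ex nAx]; split=> // /BA.
exists (E `&` ~` A); split=> // L' cL' L'L.
have PL' : P (~` L') by rewrite /P setCK setIidr //; exact: cL'.1.2.1.
have AL' : A `<=` ~` L' by move=> x Ax /L'L [_]; apply.
have L'A : ~` L' `<=` A by apply: contrapT => nL'A; exact: Amax _ (conj AL' nL'A) PL'.
by move=> x [Ex nAx]; apply: contrapT => nL'x; exact/nAx/L'A.
Qed.

Lemma exists_minimal_left_ideal : exists L, minimal_left_ideal E L.
Proof.
have [L [[[L0 [LE Ll]] clL] Lmin]] := exists_minimal_closed_left_ideal.
have LE_rcomp y : L y -> L = [set e \o y | e in E].
  move=> Ly; apply/seteqP; split; last by move=> _ [e Ee <-]; exact: Ll.
  apply: Lmin; last by move=> _ [e Ee <-]; exact: Ll.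
  split; [exact: left_ideal_rcomp (LE _ Ly) | exact: closed_rcomp_image].
exists L; split=> // J [[y Jy] [_ Jl]] JL; apply/seteqP; split=> // x.
by rewrite (LE_rcomp y (JL _ Jy)) => -[e Ee <-]; exact: Jl.
Qed.

End CompactSemigroup.

Section Flow.
Variables (T : zmodType) (X : uniformType).
Local Notation PT := {ptws X -> X}.
Variable alpha : T -> X -> X.
Hypothesis halpha : is_flow alpha.

Lemma flowD s t : alpha (s + t) = alpha s \o alpha t.
Proof. by case: halpha => _ [+ _]. Qed.

Lemma flow0 : alpha 0 = id.
Proof. by case: halpha => _ []. Qed.

Lemma flow_continuous t : continuous (alpha t).
Proof. by case: halpha => /(_ t) []. Qed.

Lemma flow_in_envelope (P : set T) t : P t -> envelope alpha P (alpha t).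
Proof. by move=> Pt; apply: subset_closure; exists t. Qed.

Lemma envelope_closed P : closed (envelope alpha P : set PT).
Proof. exact: closed_closure. Qed.

Lemma envelopeU P Q :
  envelope alpha (P `|` Q) = envelope alpha P `|` envelope alpha Q.
Proof. by rewrite /envelope image_setU closureU. Qed.

Lemma envelopeS P Q : P `<=` Q -> envelope alpha P `<=` envelope alpha Q.
Proof. by move=> PQ; apply: closureS => _ [t Pt <-]; exists t => //; exact: PQ. Qed.

Lemma compact_envelope P : compact [set: X] -> compact (envelope alpha P : set PT).
Proof.
by move=> cX; apply: (subclosed_compact (@envelope_closed P) (ptws_compact cX)).
Qed.

Lemma envelope_comp (P : set T) : (forall s t, P s -> P t -> P (s + t)) ->
  forall p q, envelope alpha P p -> envelope alpha P q ->
  envelope alpha P (p \o q).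
Proof.
move=> Padd p q Pp Pq.
have flow_comp t : P t -> envelope alpha P (alpha t \o q).
  move=> Pt; apply: (closure_sub_preimage (ptws_lcomp_continuous (@flow_continuous t))
    (@envelope_closed P) _ Pq).
  by move=> _ [s Ps <-]; rewrite /= -flowD; apply: flow_in_envelope; exact: Padd.
apply: (closure_sub_preimage (@ptws_rcomp_continuous _ q) (@envelope_closed P) _ Pp).
by move=> _ [s Ps <-]; exact: flow_comp.
Qed.

Hypothesis hX : hausdorff_space X.

Lemma envelope_commute P t p : envelope alpha P p -> alpha t \o p = p \o alpha t.
Proof.
apply: (@closure_eq_continuous PT PT (fun p : PT => (alpha t \o p : PT))
  (fun p : PT => (p \o alpha t : PT))).
- exact: hausdorff_product.
- exact/ptws_lcomp_continuous/flow_continuous.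
- exact: ptws_rcomp_continuous.
by move=> _ [s _ <-] /=; rewrite -!flowD addrC.
Qed.

Section HalfEnvelope.
Variable P : set T.
Hypothesis P_or_opp : forall t, P t \/ P (- t).
Variable Mp : set (X -> X).
Hypothesis hMp : minimal_two_sided_ideal (envelope alpha P) Mp.

Lemma minimal_ideal_flow_comp t i : Mp i -> Mp (alpha t \o i).
Proof.
case: hMp => [[[[i0 Mi0] [MpP Mpl]] Mpr] Mpmin] Mi.
case: (P_or_opp t) => Pt; first by apply: Mpl => //; exact: flow_in_envelope.
pose J := [set alpha (- t) \o j | j in Mp].
have JMp : J = Mp.
  apply: Mpmin; last by move=> _ [j Mj <-]; apply: Mpl => //; exact: flow_in_envelope.
  split; [split; [|split]|].
  - by exists (alpha (- t) \o i0); exists i0.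
  - by move=> _ [j Mj <-]; apply/MpP/Mpl => //; exact: flow_in_envelope.
  - move=> s _ Ps [j Mj <-]; exists (s \o j); first exact: Mpl.
    by rewrite compA (envelope_commute (- t) Ps).
  - by move=> _ s [j Mj <-] Ps; exists (j \o s); first exact: Mpr.
have [j Mj <-] : J i by rewrite JMp.
by rewrite compA -flowD subrr flow0.
Qed.

Lemma minimal_ideal_left_ideal_envelope : left_ideal (envelope alpha setT) Mp.
Proof.
have [[[Mp0 [MpP Mpl]] _] _] := hMp.
split=> //; split; first exact: subset_trans MpP (envelopeS (@subsetT _ P)).
(* Mp need not be closed, but envelope alpha P is: s \o a is a limit of the
   maps alpha t \o a, which lie in Mp. *)
move=> s i Es Mi; have [a [b [Ma Mb ->]]] := minimal_ideal_mul hMp Mi.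
have Psa : envelope alpha P (s \o a).
  apply: (closure_sub_preimage (@ptws_rcomp_continuous _ a) (@envelope_closed P) _ Es).
  by move=> _ [t _ <-]; apply: MpP; exact: minimal_ideal_flow_comp.
exact: (Mpl (s \o a) b Psa Mb).
Qed.

Lemma minimal_ideal_sub_envelope M :
  two_sided_ideal (envelope alpha setT) M -> Mp `<=` M.
Proof.
move=> idM; have [[[m0 Mm0] [ME _]] Mr] := idM.
have [[[i0 Mi0] _] _] := hMp.1; have [_ [MpE MpL]] := minimal_ideal_left_ideal_envelope.
apply: (minimal_ideal_sub hMp idM); first exact: envelopeS.
exists (m0 \o i0); split; [apply: Mr => //; exact: MpE | apply: MpL => //; exact: ME].
Qed.

Lemma minimal_left_ideal_sub_minimal_ideal L :
  minimal_left_ideal (envelope alpha setT) L -> L `&` envelope alpha P !=set0 ->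
  L `<=` Mp.
Proof.
move=> minL [m [Lm Pm]]; have MpE := minimal_ideal_left_ideal_envelope.
have [_ [MpT _]] := MpE; apply: (minimal_left_ideal_sub MpE minL).
have [[[[k Mk] _] Mr] _] := hMp; exists (k \o m); split; first exact: Mr.
by apply: minL.1.2.2 => //; exact: MpT.
Qed.

End HalfEnvelope.

Lemma minimal_ideal_envelopeU (P Q : set T) (M Mp Mq : set (X -> X)) :
  compact [set: X] -> P `|` Q = setT ->
  (forall t, P t \/ P (- t)) -> (forall t, Q t \/ Q (- t)) ->
  minimal_two_sided_ideal (envelope alpha setT) M ->
  minimal_two_sided_ideal (envelope alpha P) Mp ->
  minimal_two_sided_ideal (envelope alpha Q) Mq ->
  M = Mp `|` Mq.
Proof.
move=> cX PQ P_or_opp Q_or_opp hM hMp hMq.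
have compE := envelope_comp (P := setT) (fun _ _ _ _ => I).
have E0 : envelope alpha setT !=set0 by exists (alpha 0); exact: flow_in_envelope.
have exL := exists_minimal_left_ideal hX compE E0 (compact_envelope cX).
apply/seteqP; split=> [m Mm|m [Mpm|Mqm]]; last 2 first.
- exact: (minimal_ideal_sub_envelope P_or_opp hMp hM.1 Mpm).
- exact: (minimal_ideal_sub_envelope Q_or_opp hMq hM.1 Mqm).
have [L minL Lm] := minimal_ideal_cover compE exL hM Mm.
have := hM.1.1.2.1 m Mm; rewrite -PQ envelopeU => -[Pm|Qm]; [left | right].
- by apply: (minimal_left_ideal_sub_minimal_ideal P_or_opp hMp minL) => //; exists m.
- by apply: (minimal_left_ideal_sub_minimal_ideal Q_or_opp hMq minL) => //; exists m.
Qed.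

End Flow.

Theorem corollary3p8 (R : realType) (T : numDomainType)
  (hT : T = (int : numDomainType) \/ T = (R : numDomainType))
  (X : pseudoMetricType R) (hX : hausdorff_space X) (cX : compact [set: X])
  (alpha : T -> X -> X) (halpha : is_flow alpha)
  (M Mp Mm : set (X -> X))
  (hM : minimal_two_sided_ideal (envelope alpha setT) M)
  (hMp : minimal_two_sided_ideal (envelope alpha [set t | 0 <= t]) Mp)
  (hMm : minimal_two_sided_ideal (envelope alpha [set t | t <= 0]) Mm) :
  M = Mp `|` Mm
  /\ left_ideal (envelope alpha setT) Mp
  /\ left_ideal (envelope alpha setT) Mm.
Proof.
have sign_cases : forall t : T, 0 <= t \/ t <= 0.
  by case: hT => eT; subst T => t; case/orP: (le_total 0 t) => ?; by [left | right].
have nonneg_or_opp (t : T) : 0 <= t \/ 0 <= - t by rewrite oppr_ge0; exact: sign_cases.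
have nonpos_or_opp (t : T) : t <= 0 \/ - t <= 0.
  by rewrite oppr_le0; case: (sign_cases t); [right | left].
split.
  apply: (minimal_ideal_envelopeU halpha hX cX _ nonneg_or_opp nonpos_or_opp hM hMp hMm).
  by apply/seteqP; split=> t // _; exact: sign_cases.
split.
- exact: (minimal_ideal_left_ideal_envelope halpha hX nonneg_or_opp hMp).
- exact: (minimal_ideal_left_ideal_envelope halpha hX nonpos_or_opp hMm).
Qed.
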